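(* Let $\mathcal{L}=(\mathrm{Fm},\vdash)$ be a logic for which $\wedge_P$, $\vee_S$, $\bot_P$ and $\top_W$ hold, and let $N\subseteq\mathrm{Fm}\times\mathrm{Fm}$ be a normative system. For $1\le i\le4$ let $P_i=P_{N_i}$ and $P_i^c=(\mathrm{Fm}\times\mathrm{Fm})\setminus P_i$. Then $P_1^c$ is closed under $(\top)^{\rhd},(\mathrm{SI})^{\rhd},(\mathrm{WO})^{\rhd},(\mathrm{AND})^{\rhd}$; $P_2^c$ is closed under these and $(\mathrm{OR})^{\rhd}$; $P_3^c$ is closed under $(\top)^{\rhd},(\mathrm{SI})^{\rhd},(\mathrm{WO})^{\rhd},(\mathrm{AND})^{\rhd},(\mathrm{CT})^{\rhd}$; $P_4^c$ is closed under $(\top)^{\rhd},(\mathrm{SI})^{\rhd},(\mathrm{WO})^{\rhd},(\mathrm{AND})^{\rhd},(\mathrm{OR})^{\rhd},(\mathrm{CT})^{\rhd}$, where in $(\mathrm{CT})^{\rhd}$ for $P_i^c$ the normative system referred to is $N_i$.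
   Context: Logic $\mathcal{L}=(\mathrm{Fm},\vdash)$ with consequence relation $\vdash$; $Cn(\Gamma)=\{\psi\mid\Gamma\vdash\psi\}$, $Cn(\varphi,\psi)=Cn(\{\varphi,\psi\})$. $\wedge_P$: a binary term $\wedge$ with $Cn(\varphi\wedge\psi)=Cn(\{\varphi,\psi\})$; $\vee_S$: a binary term $\vee$ with $Cn(\Gamma,\varphi\vee\psi)=Cn(\Gamma\cup\{\varphi\})\cap Cn(\Gamma\cup\{\psi\})$ for all $\Gamma$; $\bot_P$: a constant $\bot$ with $Cn(\{\bot\})=\mathrm{Fm}$; $\top_W$: a constant $\top$ with $\top\in Cn(\{\varphi\})$ for all $\varphi$. Rules on a normative system $N$: $(\top)$: $(\top,\top)\in N$; (SI): $(\alpha,\varphi)\in N,\beta\vdash\alpha\Rightarrow(\beta,\varphi)\in N$; (WO): $(\alpha,\varphi)\in N,\varphi\vdash\psi\Rightarrow(\alpha,\psi)\in N$; (AND): $(\alpha,\varphi),(\alpha,\psi)\in N\Rightarrow(\alpha,\varphi\wedge\psi)\in N$; (OR): $(\alpha,\varphi),(\beta,\varphi)\in N\Rightarrow(\alpha\vee\beta,\varphi)\in N$; (CT): $(\alpha,\varphi),(\alpha\wedge\varphi,\psi)\in N\Rightarrow(\alpha,\psi)\in N$. $N_i$ is the smallest extension of $N$ closed under: $N_1$: $(\top)$,(SI),(WO),(AND); $N_2$: these and (OR); $N_3$: $(\top)$,(SI),(WO),(AND),(CT); $N_4$: all of $(\top)$,(SI),(WO),(AND),(OR),(CT). For a normative system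 $M$, $P_M=\{(\alpha,\varphi)\mid\forall\psi((\alpha,\psi)\in M\Rightarrow Cn(\varphi,\psi)\neq\mathrm{Fm})\}$. Rules on a relation $R$ (relative to a normative system $M$): $(\top)^{\rhd}$: $(\top,\bot)\in R$; $(\mathrm{SI})^{\rhd}$: $(\beta,\varphi)\in R,\alpha\vdash\beta\Rightarrow(\alpha,\varphi)\in R$; $(\mathrm{WO})^{\rhd}$: $(\alpha,\psi)\in R,\varphi\vdash\psi\Rightarrow(\alpha,\varphi)\in R$; $(\mathrm{AND})^{\rhd}$: $(\alpha,\varphi),(\alpha,\psi)\in R\Rightarrow(\alpha,\varphi\vee\psi)\in R$; $(\mathrm{OR})^{\rhd}$: $(\alpha,\varphi),(\beta,\varphi)\in R\Rightarrow(\alpha\vee\beta,\varphi)\in R$; $(\mathrm{CT})^{\rhd}$: $(\alpha,\varphi)\in M,(\alpha\wedge\varphi,\psi)\in R\Rightarrow(\alpha,\psi)\in R$. *)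

Set Implicit Arguments.

Record Logic := {
  Fm : Type;
  cons : (Fm -> Prop) -> Fm -> Prop;
  cons_refl : forall (G : Fm -> Prop) phi, G phi -> cons G phi;
  cons_mono : forall (G H : Fm -> Prop) phi,
      (forall x, G x -> H x) -> cons G phi -> cons H phi;
  cons_cut : forall (G H : Fm -> Prop) phi,
      (forall x, H x -> cons G x) -> cons H phi -> cons G phi
}.

Section Defs.
Variable L : Logic.
Notation Fm := (Fm L).

Definition single (a : Fm) : Fm -> Prop := fun x => x = a.
Definition pair (a b : Fm) : Fm -> Prop := fun x => x = a \/ x = b.
Definition addf (G : Fm -> Prop) (a : Fm) : Fm -> Prop := fun x => G x \/ x = a.

Definition Cn (G : Fm -> Prop) : Fm -> Prop := fun psi => cons L G psi.
Definition ent1 (b a : Fm) : Prop := cons L (single b) a.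

Definition conj_P (and_ : Fm -> Fm -> Fm) : Prop :=
  forall phi psi chi, Cn (single (and_ phi psi)) chi <-> Cn (pair phi psi) chi.
Definition disj_S (or_ : Fm -> Fm -> Fm) : Prop :=
  forall (G : Fm -> Prop) phi psi chi,
    Cn (addf G (or_ phi psi)) chi <-> (Cn (addf G phi) chi /\ Cn (addf G psi) chi).
Definition bot_P (bot : Fm) : Prop := forall chi, Cn (single bot) chi.
Definition top_W (top : Fm) : Prop := forall phi, Cn (single phi) top.

Variables (and_ or_ : Fm -> Fm -> Fm) (bot top : Fm).

Definition rule_top (M : Fm -> Fm -> Prop) : Prop := M top top.
Definition rule_SI (M : Fm -> Fm -> Prop) : Prop :=
  forall a b phi, M a phi -> ent1 b a -> M b phi.
Definition rule_WO (M : Fm -> Fm -> Prop) : Prop :=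
  forall a phi psi, M a phi -> ent1 phi psi -> M a psi.
Definition rule_AND (M : Fm -> Fm -> Prop) : Prop :=
  forall a phi psi, M a phi -> M a psi -> M a (and_ phi psi).
Definition rule_OR (M : Fm -> Fm -> Prop) : Prop :=
  forall a b phi, M a phi -> M b phi -> M (or_ a b) phi.
Definition rule_CT (M : Fm -> Fm -> Prop) : Prop :=
  forall a phi psi, M a phi -> M (and_ a phi) psi -> M a psi.

Definition closed1 M := rule_top M /\ rule_SI M /\ rule_WO M /\ rule_AND M.
Definition closed2 M := closed1 M /\ rule_OR M.
Definition closed3 M := closed1 M /\ rule_CT M.
Definition closed4 M := closed1 M /\ rule_OR M /\ rule_CT M.

Definition closure (closed : (Fm -> Fm -> Prop) -> Prop) (N : Fm -> Fm -> Prop)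
  : Fm -> Fm -> Prop :=
  fun a phi => forall M : Fm -> Fm -> Prop,
    (forall x y, N x y -> M x y) -> closed M -> M a phi.

Definition N1 N := closure closed1 N.
Definition N2 N := closure closed2 N.
Definition N3 N := closure closed3 N.
Definition N4 N := closure closed4 N.

Definition PM (M : Fm -> Fm -> Prop) : Fm -> Fm -> Prop :=
  fun a phi => forall psi, M a psi -> ~ (forall chi, Cn (pair phi psi) chi).
Definition PMc (M : Fm -> Fm -> Prop) : Fm -> Fm -> Prop :=
  fun a phi => ~ PM M a phi.

Definition drule_top (R : Fm -> Fm -> Prop) : Prop := R top bot.
Definition drule_SI (R : Fm -> Fm -> Prop) : Prop :=
  forall a b phi, R b phi -> ent1 a b -> R a phi.
Definition drule_WO (R : Fm -> Fm -> Prop) : Prop :=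
  forall a phi psi, R a psi -> ent1 phi psi -> R a phi.
Definition drule_AND (R : Fm -> Fm -> Prop) : Prop :=
  forall a phi psi, R a phi -> R a psi -> R a (or_ phi psi).
Definition drule_OR (R : Fm -> Fm -> Prop) : Prop :=
  forall a b phi, R a phi -> R b phi -> R (or_ a b) phi.
Definition drule_CT (M R : Fm -> Fm -> Prop) : Prop :=
  forall a phi psi, M a phi -> R (and_ a phi) psi -> R a psi.

End Defs.

From Stdlib Require Import Classical.

(* A pair (a, phi) lies outside P_M exactly when M contains some (a, psi)
   with {phi, psi} explosive.  Each dual rule for the complement then follows
   from the matching rule of M applied to such witnesses: for (AND)^ the
   witnesses psi1, psi2 of phi and phi' combine into psi1 /\ psi2, which is
   explosive with phi \/ phi' by proof by cases; for (OR)^ both witnesses are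
   weakened to psi1 \/ psi2 before (OR) is applied.  The systems N_i satisfy
   the rules they are built from because each rule is preserved under
   intersections. *)

Section Consequence.
Variable L : Logic.

Definition inconsistent (phi psi : Fm L) : Prop :=
  forall chi, Cn L (pair L phi psi) chi.

Lemma inconsistent_sym {phi psi} : inconsistent phi psi -> inconsistent psi phi.
Proof.
  intros H chi. apply (cons_mono L (pair L phi psi)); [|apply H].
  intros x [Hx | Hx]; [right | left]; exact Hx.
Qed.

Lemma inconsistent_ent1 {phi phi' psi} :
  ent1 L phi phi' -> inconsistent phi' psi -> inconsistent phi psi.
Proof.
  intros Hent H chi. apply (cons_cut L _ (pair L phi' psi)); [|apply H].
  intros x [-> | ->].
  - apply (cons_mono L (single L phi)); [|exact Hent].
    intros y Hy; left; exact Hy.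
  - apply cons_refl; right; reflexivity.
Qed.

Lemma PMc_iff (M : Fm L -> Fm L -> Prop) a phi :
  PMc L M a phi <-> exists psi, M a psi /\ inconsistent phi psi.
Proof.
  split.
  - intro H. apply NNPP; intro Hnone.
    apply H; intros psi HM Hinc. apply Hnone; exists psi; split; assumption.
  - intros [psi [HM Hinc]] H. exact (H psi HM Hinc).
Qed.

Section Connectives.
Variables (and_ or_ : Fm L -> Fm L -> Fm L) (bot top : Fm L).
Hypothesis HandP : conj_P L and_.
Hypothesis HorS : disj_S L or_.
Hypothesis HbotP : bot_P L bot.

Lemma ent1_and_l phi psi : ent1 L (and_ phi psi) phi.
Proof. apply (proj2 (HandP phi psi phi)). apply cons_refl; left; reflexivity. Qed.

Lemma ent1_and_r phi psi : ent1 L (and_ phi psi) psi.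
Proof. apply (proj2 (HandP phi psi psi)). apply cons_refl; right; reflexivity. Qed.

Lemma ent1_or phi psi : ent1 L phi (or_ phi psi) /\ ent1 L psi (or_ phi psi).
Proof.
  pose (empty := fun _ : Fm L => False).
  assert (Hrefl : Cn L (addf L empty (or_ phi psi)) (or_ phi psi))
    by (apply cons_refl; right; reflexivity).
  apply HorS in Hrefl as [Hphi Hpsi].
  split; [revert Hphi | revert Hpsi]; apply cons_mono; intros x [[] | Hx]; exact Hx.
Qed.

Lemma inconsistent_bot psi : inconsistent bot psi.
Proof.
  intro chi. apply (cons_mono L (single L bot)); [|apply HbotP].
  intros x Hx; left; exact Hx.
Qed.

Lemma inconsistent_or {phi phi' psi} :
  inconsistent phi psi -> inconsistent phi' psi -> inconsistent (or_ phi phi') psi.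
Proof.
  intros H H' chi.
  specialize (H chi). specialize (H' chi).
  apply (cons_mono L (addf L (single L psi) (or_ phi phi'))).
  { intros x [Hx | Hx]; [right | left]; exact Hx. }
  apply HorS; split; [revert H | revert H']; apply cons_mono;
    (intros x [Hx | Hx]; [right | left]; exact Hx).
Qed.

Section Complement.
Variable M : Fm L -> Fm L -> Prop.
Let R := PMc L M.

Lemma PMc_drule_top : rule_top L top M -> drule_top L bot top R.
Proof. intro Htop. apply PMc_iff. exists top; split; [exact Htop | apply inconsistent_bot]. Qed.

Lemma PMc_drule_SI : rule_SI L M -> drule_SI L R.
Proof.
  intros HSI a b phi Hb Hent. apply PMc_iff in Hb as [psi [HM Hinc]].
  apply PMc_iff. exists psi; split; [exact (HSI _ _ _ HM Hent) | exact Hinc].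
Qed.

Lemma PMc_drule_WO : drule_WO L R.
Proof.
  intros a phi psi Hpsi Hent. apply PMc_iff in Hpsi as [q [HM Hinc]].
  apply PMc_iff. exists q; split; [exact HM | exact (inconsistent_ent1 Hent Hinc)].
Qed.

Lemma PMc_drule_AND : rule_AND L and_ M -> drule_AND L or_ R.
Proof.
  intros HAND a phi psi Hphi Hpsi.
  apply PMc_iff in Hphi as [q1 [HM1 Hinc1]].
  apply PMc_iff in Hpsi as [q2 [HM2 Hinc2]].
  apply PMc_iff. exists (and_ q1 q2); split; [exact (HAND _ _ _ HM1 HM2)|].
  apply inconsistent_or; apply inconsistent_sym.
  - exact (inconsistent_ent1 (ent1_and_l q1 q2) (inconsistent_sym Hinc1)).
  - exact (inconsistent_ent1 (ent1_and_r q1 q2) (inconsistent_sym Hinc2)).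
Qed.

Lemma PMc_drule_OR : rule_WO L M -> rule_OR L or_ M -> drule_OR L or_ R.
Proof.
  intros HWO HOR a b phi Ha Hb.
  apply PMc_iff in Ha as [q1 [HM1 Hinc1]].
  apply PMc_iff in Hb as [q2 [HM2 Hinc2]].
  destruct (ent1_or q1 q2) as [Hq1 Hq2].
  apply PMc_iff. exists (or_ q1 q2); split.
  - exact (HOR _ _ _ (HWO _ _ _ HM1 Hq1) (HWO _ _ _ HM2 Hq2)).
  - apply inconsistent_sym, inconsistent_or; apply inconsistent_sym; assumption.
Qed.

Lemma PMc_drule_CT : rule_CT L and_ M -> drule_CT L and_ M R.
Proof.
  intros HCT a phi psi HM Hpsi. apply PMc_iff in Hpsi as [q [HMq Hinc]].
  apply PMc_iff. exists q; split; [exact (HCT _ _ _ HM HMq) | exact Hinc].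
Qed.

End Complement.

Section Closure.
Variables (closed : (Fm L -> Fm L -> Prop) -> Prop) (N : Fm L -> Fm L -> Prop).
Let C := closure L closed N.

Lemma closure_rule_top : (forall M, closed M -> rule_top L top M) -> rule_top L top C.
Proof. intros Hrule M _ HM. exact (Hrule M HM). Qed.

Lemma closure_rule_SI : (forall M, closed M -> rule_SI L M) -> rule_SI L C.
Proof. intros Hrule a b phi H Hent M HN HM. exact (Hrule M HM _ _ _ (H M HN HM) Hent). Qed.

Lemma closure_rule_WO : (forall M, closed M -> rule_WO L M) -> rule_WO L C.
Proof. intros Hrule a phi psi H Hent M HN HM. exact (Hrule M HM _ _ _ (H M HN HM) Hent). Qed.

Lemma closure_rule_AND : (forall M, closed M -> rule_AND L and_ M) -> rule_AND L and_ C.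
Proof. intros Hrule a phi psi H H' M HN HM. exact (Hrule M HM _ _ _ (H M HN HM) (H' M HN HM)). Qed.

Lemma closure_rule_OR : (forall M, closed M -> rule_OR L or_ M) -> rule_OR L or_ C.
Proof. intros Hrule a b phi H H' M HN HM. exact (Hrule M HM _ _ _ (H M HN HM) (H' M HN HM)). Qed.

Lemma closure_rule_CT : (forall M, closed M -> rule_CT L and_ M) -> rule_CT L and_ C.
Proof. intros Hrule a phi psi H H' M HN HM. exact (Hrule M HM _ _ _ (H M HN HM) (H' M HN HM)). Qed.

Lemma closure_closed1 :
  (forall M, closed M -> closed1 L and_ top M) -> closed1 L and_ top C.
Proof.
  intro Hcl. repeat split.
  - apply closure_rule_top; intros M HM; apply Hcl, HM.
  - apply closure_rule_SI; intros M HM; apply Hcl, HM.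
  - apply closure_rule_WO; intros M HM; apply Hcl, HM.
  - apply closure_rule_AND; intros M HM; apply Hcl, HM.
Qed.

End Closure.

Lemma closed1_N1 N : closed1 L and_ top (N1 L and_ top N).
Proof. apply closure_closed1; intros M HM; exact HM. Qed.

Lemma closed2_N2 N : closed2 L and_ or_ top (N2 L and_ or_ top N).
Proof.
  split.
  - apply closure_closed1; intros M [HM _]; exact HM.
  - apply closure_rule_OR; intros M [_ HM]; exact HM.
Qed.

Lemma closed3_N3 N : closed3 L and_ top (N3 L and_ top N).
Proof.
  split.
  - apply closure_closed1; intros M [HM _]; exact HM.
  - apply closure_rule_CT; intros M [_ HM]; exact HM.
Qed.

Lemma closed4_N4 N : closed4 L and_ or_ top (N4 L and_ or_ top N).
Proof.
  split; [|split].
  - apply closure_closed1; intros M [HM _]; exact HM.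
  - apply closure_rule_OR; intros M (_ & HM & _); exact HM.
  - apply closure_rule_CT; intros M (_ & _ & HM); exact HM.
Qed.

End Connectives.
End Consequence.

Theorem corollary4p6 (L : Logic) (and_ or_ : Fm L -> Fm L -> Fm L) (bot top : Fm L)
  (HandP : conj_P L and_) (HorS : disj_S L or_) (HbotP : bot_P L bot)
  (HtopW : top_W L top) (N : Fm L -> Fm L -> Prop) :
  (let R := PMc L (N1 L and_ top N) in
     drule_top L bot top R /\ drule_SI L R /\ drule_WO L R /\ drule_AND L or_ R) /\
  (let R := PMc L (N2 L and_ or_ top N) in
     drule_top L bot top R /\ drule_SI L R /\ drule_WO L R /\ drule_AND L or_ R /\
     drule_OR L or_ R) /\
  (let M := N3 L and_ top N in let R := PMc L M in
     drule_top L bot top R /\ drule_SI L R /\ drule_WO L R /\ drule_AND L or_ R /\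
     drule_CT L and_ M R) /\
  (let M := N4 L and_ or_ top N in let R := PMc L M in
     drule_top L bot top R /\ drule_SI L R /\ drule_WO L R /\ drule_AND L or_ R /\
     drule_OR L or_ R /\ drule_CT L and_ M R).
Proof.
  destruct (closed1_N1 L and_ top N) as (T1 & SI1 & WO1 & AND1).
  destruct (closed2_N2 L and_ or_ top N) as ((T2 & SI2 & WO2 & AND2) & OR2).
  destruct (closed3_N3 L and_ top N) as ((T3 & SI3 & WO3 & AND3) & CT3).
  destruct (closed4_N4 L and_ or_ top N) as ((T4 & SI4 & WO4 & AND4) & OR4 & CT4).
  cbv zeta; repeat split;
    first [ apply PMc_drule_top | apply PMc_drule_SI | apply PMc_drule_WO
          | eapply PMc_drule_AND | apply PMc_drule_OR | apply PMc_drule_CT ];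
    eassumption.
Qed.
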